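(* Let $\mathcal N$ be a monotone BAN of size $n$ and $x\to y$ a synchronous transition of $\mathcal N$. If there is no $x$-critical cycle of $\mathcal N$ whose node set is contained in $D(x,y)$, then there is a derivation from $x$ to $y$ consisting only of asynchronous transitions (i.e. $x\to^*_{a} y$). Consequently, if for some $m\ge2$ the network $\mathcal N$ has no critical cycle with at most $m$ distinct nodes, then every transition of size at most $m$ can be decomposed into a derivation of asynchronous transitions.
   Context: Let $n\ge 1$, $V=\{0,\dots,n-1\}$, $\mathbb B=\{0,1\}$; $\bar x^{i}$ is $x$ with coordinate $i$ negated; $D(x,y)=\{i:x_i\ne y_i\}$, $d(x,y)=|D(x,y)|$; $\mathbf s(1)=1,\mathbf s(0)=-1$. A BAN of size $n$ is a family $(f_i)_{i\in V}$, $f_i:\mathbb B^n\to\mathbb B$; monotone if for all $i,j$, either $\mathbf s(x_j)(f_i(x)-f_i(\bar x^{j}))\ge0$ for all $x$, or $\le0$ for all $x$. Structure $G=(V,A)$, $A=\{(j,i):\exists x,\ f_i(x)\ne f_i(\bar x^j)\}$; $\mathrm{sign}(j,i)=\mathbf s(x_j)(f_i(x)-f_i(\bar x^j))\in\{\pm1\}$ for any $x$ with $f_i(x)\ne f_i(\bar x^j)$. $U(x)=\{i:f_i(x)\ne x_i\}$; $\mathrm{FRUS}(x)=\{(j,i)\in A:\mathbf s(x_j)\mathbf s(x_i)=-\mathrm{sign}(j,i)\}$. A transition is a pair $(x,y)$ with $\emptyset\ne D(x,y)\subseteq U(x)$, written $x\to y$, of size $d(x,y)$; asynchronous if of size 1,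 synchronous if of size $\ge2$. A derivation is a finite sequence $x^0\to x^1\to\dots\to x^k$ ($k\ge1$) of transitions; $x\to^*_a y$ means there is a derivation from $x$ to $y$ made of asynchronous transitions. A cycle of $\mathcal N$ is a subgraph $(V_C,A_C)$ of $G$ made of the nodes and arcs of a closed directed walk with no repeated arcs (nodes may repeat); it is $x$-critical if $V_C\subseteq U(x)$ and $A_C\subseteq\mathrm{FRUS}(x)$, and critical if $x$-critical for some $x$. *)

From HB Require Import structures.
From mathcomp Require Import all_boot all_order all_algebra.
Set Implicit Arguments. Unset Strict Implicit. Unset Printing Implicit Defensive.
Import GRing.Theory Num.Theory.

Definition config (n : nat) := {ffun 'I_n -> bool}.

Definition BAN (n : nat) := 'I_n -> config n -> bool.

Section BANdefs.
Variable n : nat.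
Implicit Types (f : BAN n) (x y : config n) (i j : 'I_n).

Definition flip x j : config n := [ffun k => if k == j then ~~ x k else x k].

Definition sgn (b : bool) : int := if b then 1%R else (-1)%R.

Definition bint (b : bool) : int := if b then 1%R else 0%R.

Definition effect f x j i : int :=
  (sgn (x j) * (bint (f i x) - bint (f i (flip x j))))%R.

Definition monotone f : Prop :=
  forall i j, (forall x, (0 <= effect f x j i)%R) \/ (forall x, (effect f x j i <= 0)%R).

Definition arc f j i : bool := [exists x, f i x != f i (flip x j)].

(* sign(j,i), computed at some x witnessing the arc (0 if not an arc) *)
Definition sign f j i : int :=
  match [pick x | f i x != f i (flip x j)] with
  | Some x => effect f x j i
  | None => 0%R
  end.

Definition Uset f x : {set 'I_n} := [set i | f i x != x i].
Definition Dset x y : {set 'I_n} := [set i | x i != y i].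

Definition frus f x j i : bool :=
  arc f j i && (sgn (x j) * sgn (x i) == - sign f j i)%R.

Definition transition f x y : Prop :=
  Dset x y != set0 /\ Dset x y \subset Uset f x.

Definition async_transition f x y : Prop :=
  transition f x y /\ #|Dset x y| = 1.

Inductive async_deriv f : config n -> config n -> Prop :=
| ad_one x y : async_transition f x y -> async_deriv f x y
| ad_cons x y z : async_transition f x y -> async_deriv f y z -> async_deriv f x z.

(* Arcs of the closed walk w = [v0; ...; v_{k-1}] : (v_t, v_{t+1 mod k}) *)
Definition walk_arcs (w : seq 'I_n) : seq ('I_n * 'I_n) := zip w (rot 1 w).

(* w is a closed directed walk of G with no repeated arcs; the cycle is the
   subgraph with node set [set v in w] and arc set [set a in walk_arcs w]. *)
Definition cycle_walk f (w : seq 'I_n) : bool :=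
  (w != [::]) && all (fun a => arc f a.1 a.2) (walk_arcs w) && uniq (walk_arcs w).

Definition x_critical f x (w : seq 'I_n) : bool :=
  all (fun v => v \in Uset f x) w && all (fun a => frus f x a.1 a.2) (walk_arcs w).

Definition cycle_nodes (w : seq 'I_n) : nat := size (undup w).

End BANdefs.

(* Proof idea: order the unstable coordinates of D(x,y) so that each one can be
   updated alone. Pick i in D(x,y) with no arc of FRUS(x) from i into D(x,y); such
   an i exists because otherwise following frustrated arcs inside D(x,y) closes
   an x-critical cycle. Updating i alone cannot stabilise another j in D(x,y):
   by monotonicity, an arc (i,j) whose flip disables j is frustrated. Frustration
   between nodes other than i does not depend on x_i, so the hypothesis passes to
   the transition from flip x i to y, and induction on |D(x,y)| concludes. *)
From Pilot Require Import Defs.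
From HB Require Import structures.
From mathcomp Require Import all_boot all_order all_algebra.
Set Implicit Arguments. Unset Strict Implicit. Unset Printing Implicit Defensive.

Lemma fcycle_orbit_from (T : finType) (g : T -> T) (a : T) :
  exists2 b, fconnect g a b & fcycle g (orbit g b).
Proof.
have [i lt_i_order iter_order_eq] :
    exists2 i, i < order g a & iter (order g a) g a = iter i g a.
  by apply/trajectP; apply: looping_order.
exists (iter i g a); first exact: fconnect_iter.
apply: ((orbitPcycle (f:=g) 3 0).1); exists (order g a - i).-1.
by rewrite prednK ?subn_gt0 // -iterD subnK ?iter_order_eq // ltnW.
Qed.

Section Walks.
Variable n : nat.
Implicit Types (w : seq 'I_n) (S : {set 'I_n}).

Lemma mem_walk_arcs w a : a \in walk_arcs w -> (a.1 \in w) && (a.2 \in w).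
Proof.
have size_rot1 : size w = size (rot 1 w) by rewrite size_rot.
move=> a_arc; apply/andP; split.
  by have := map_f fst a_arc; rewrite -/(unzip1 _) unzip1_zip ?size_rot1.
by have := map_f snd a_arc; rewrite -/(unzip2 _) unzip2_zip ?size_rot1 ?mem_rot.
Qed.

Lemma uniq_walk_arcs w : uniq w -> uniq (walk_arcs w).
Proof.
move=> uw; apply: (@map_uniq _ _ fst).
by rewrite -/(unzip1 _) unzip1_zip // size_rot.
Qed.

Lemma fcycle_walk_arcs (g : 'I_n -> 'I_n) w :
  fcycle g w -> all (fun a => g a.1 == a.2) (walk_arcs w).
Proof.
case: w => [|c p] //; rewrite /walk_arcs rot1_cons /=.
elim: p c {1 3}c => [|d p IH] c0 c /=; first by rewrite andbT.
by case/andP=> -> /IH.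
Qed.

Lemma closed_walk_of_successors (e : rel 'I_n) S :
  S != set0 -> (forall i, i \in S -> exists2 j, j \in S & e i j) ->
  exists w, [&& w != [::], uniq w, all (fun v => v \in S) w
              & all (fun a => e a.1 a.2) (walk_arcs w)].
Proof.
case/set0Pn=> a aS succ.
pose g i := odflt i [pick j in S | e i j].
have gS i : i \in S -> (g i \in S) && e i (g i).
  move=> iS; rewrite /g; case: pickP => [j /andP[-> ->] //|none].
  by have [j jS eij] := succ i iS; have := none j; rewrite jS eij.
have closedS y : fconnect g a y -> y \in S.
  move/iter_findex <-; elim: (findex g a y) => //= k IHk.
  by case/andP: (gS _ IHk).
have [b ab cyc_b] := fcycle_orbit_from g a.
have orbitS y : y \in orbit g b -> y \in S.
  by rewrite -fconnect_orbit => /(connect_trans ab); apply: closedS.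
exists (orbit g b); apply/and4P; split.
- by apply/eqP => orbit0; have := in_orbit g b; rewrite orbit0.
- exact: orbit_uniq.
- exact/allP.
apply/allP => x x_arc; have /eqP <- := allP (fcycle_walk_arcs cyc_b) x x_arc.
by case/andP: (gS _ (orbitS _ (andP (mem_walk_arcs x_arc)).1)).
Qed.

Lemma cycle_nodes_le w S : all (fun v => v \in S) w -> cycle_nodes w <= #|S|.
Proof.
move=> /allP wS; rewrite /cycle_nodes -(card_uniqP (undup_uniq w)).
by apply: subset_leq_card; apply/subsetP => v; rewrite mem_undup; apply: wS.
Qed.

End Walks.

Section Flip.
Variable n : nat.
Implicit Types (x y : config n) (i j : 'I_n).

Lemma flip_self x i : flip x i i = ~~ x i.
Proof. by rewrite /flip ffunE eqxx. Qed.

Lemma flip_neq x i j : j != i -> flip x i j = x j.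
Proof. by move=> ji; rewrite /flip ffunE (negbTE ji). Qed.

Lemma Dset_eq0 x y : Dset x y = set0 -> x = y.
Proof.
move=> D0; apply/ffunP => j; apply/eqP; apply: contraT => xyj.
by have := in_set0 j; rewrite -D0 inE xyj.
Qed.

Lemma Dset_flip_self x i : Dset x (flip x i) = [set i].
Proof.
apply/setP => j; rewrite !inE; case: (eqVneq j i) => [->|ji].
  by rewrite flip_self; case: (x i).
by rewrite flip_neq // eqxx.
Qed.

Lemma Dset_flip x y i : i \in Dset x y -> Dset (flip x i) y = Dset x y :\ i.
Proof.
rewrite inE => xyi; apply/setP => j; rewrite !inE.
case: (eqVneq j i) => [->|ji] /=; last by rewrite flip_neq.
by move: xyi; rewrite flip_self; case: (x i); case: (y i).
Qed.

Lemma async_transition_flip (f : BAN n) x i :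
  i \in Uset f x -> async_transition f x (flip x i).
Proof.
move=> iU; rewrite /async_transition /transition Dset_flip_self cards1 sub1set.
by split=> //; split=> //; apply/set0Pn; exists i; rewrite inE.
Qed.

End Flip.

Section Frustration.
Variables (n : nat) (f : BAN n).
Hypothesis f_monotone : monotone f.
Implicit Types (x : config n) (i j : 'I_n).

Lemma effect_unit x j i : f i x != f i (flip x j) ->
  effect f x j i = 1%R \/ effect f x j i = (-1)%R.
Proof.
by rewrite /effect; case: (x j); case: (f i x); case: (f i (flip x j)) => //=; auto.
Qed.

Lemma sign_effect x j i : f i x != f i (flip x j) -> sign f j i = effect f x j i.
Proof.
move=> fxj; rewrite /sign; case: pickP => [x0 fx0j|/(_ x)]; last by rewrite fxj.
have [e0|e0] := effect_unit fx0j; have [e|e] := effect_unit fxj; rewrite e0 e //;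
case: (f_monotone i j) => mono; have := mono x; have := mono x0; rewrite e e0 //.
Qed.

Lemma frus_of_disabling x i j :
  f j x != x j -> f j (flip x i) != f j x -> frus f x i j.
Proof.
move=> unstable_j changed_j.
have arc_ij : Defs.arc f i j by apply/existsP; exists x; rewrite eq_sym.
rewrite /frus arc_ij (sign_effect (x:=x)) 1?eq_sym // /effect.
have fjx : f j x = ~~ x j by move: unstable_j; case: (f j x); case: (x j).
have fjx' : f j (flip x i) = x j.
  by move: changed_j; rewrite fjx; case: (f j (flip x i)); case: (x j).
by rewrite fjx fjx'; case: (x i); case: (x j).
Qed.

Lemma Uset_flip x i j :
  j != i -> j \in Uset f x -> ~~ frus f x i j -> j \in Uset f (flip x i).
Proof.
move=> ji; rewrite !inE flip_neq // => unstable_j; apply: contraNN => stable_j'.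
by apply: frus_of_disabling => //; rewrite (eqP stable_j') eq_sym.
Qed.

End Frustration.

Lemma frus_flip n (f : BAN n) x i a b :
  a != i -> b != i -> frus f (flip x i) a b = frus f x a b.
Proof. by move=> ai bi; rewrite /frus !flip_neq. Qed.

Section Decomposition.
Variables (n : nat) (f : BAN n).
Hypothesis f_monotone : monotone f.
Implicit Types (x y : config n) (S : {set 'I_n}).

Definition noncritical x S :=
  ~ exists w : seq 'I_n,
    [&& cycle_walk f w, x_critical f x w & all (fun v => v \in S) w].

Lemma noncritical_sink x S : S \subset Uset f x -> S != set0 -> noncritical x S ->
  exists2 i, i \in S & forall j, j \in S -> ~~ frus f x i j.
Proof.
move=> SU S0 noncrit.
have [sink|no_sink] := boolP [exists i in S, forall j in S, ~~ frus f x i j].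
  by case/exists_inP: sink => i iS /forall_inP; exists i.
have succ i : i \in S -> exists2 j, j \in S & frus f x i j.
  move=> iS; move: no_sink; rewrite negb_exists_in => /forall_inP/(_ i iS).
  by rewrite negb_forall_in => /exists_inP[j jS /negPn]; exists j.
have [w /and4P[w0 uw wS w_frus]] := closed_walk_of_successors S0 succ.
case: noncrit; exists w; apply/and3P; split=> //.
- rewrite /cycle_walk w0 uniq_walk_arcs // andbT.
  by apply/allP => a /(allP w_frus)/andP[].
- rewrite /x_critical w_frus andbT.
  by apply/allP => v /(allP wS); apply: (subsetP SU).
Qed.

Lemma noncritical_flip x S i :
  S \subset Uset f x -> noncritical x S -> noncritical (flip x i) (S :\ i).
Proof.
move=> SU noncrit [w /and3P[cyc_w /andP[_ w_frus] wS]]; apply: noncrit; exists w.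
have w_ok v : v \in w -> (v != i) && (v \in S).
  by move/(allP wS); rewrite in_setD1.
apply/and3P; split=> //; last by apply/allP => v /w_ok/andP[].
rewrite /x_critical; apply/andP; split.
  by apply/allP => v /w_ok/andP[_ /(subsetP SU)].
apply/allP => a a_arc; have /andP[a1w a2w] := mem_walk_arcs a_arc.
have /andP[a1i _] := w_ok _ a1w; have /andP[a2i _] := w_ok _ a2w.
by rewrite -(frus_flip _ _ a1i a2i); apply: (allP w_frus).
Qed.

Lemma async_deriv_of_noncritical x y :
  transition f x y -> noncritical x (Dset x y) -> async_deriv f x y.
Proof.
have [k] := ubnP #|Dset x y|; elim: k x => // k IH x D_lt [D0 DU] noncrit.
have [i iD sink] := noncritical_sink DU D0 noncrit.
have step := async_transition_flip (subsetP DU i iD).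
have [/Dset_eq0 <-|D'0] := eqVneq (Dset (flip x i) y) set0; first exact: ad_one.
apply: ad_cons step (IH _ _ _ _) => //.
- by rewrite -ltnS (leq_trans _ D_lt) // ltnS Dset_flip // proper_card // properD1.
- split=> //; apply/subsetP => j; rewrite Dset_flip // in_setD1 => /andP[ji jD].
  exact: Uset_flip f_monotone _ _ _ ji (subsetP DU j jD) (sink j jD).
- by rewrite Dset_flip //; apply: noncritical_flip.
Qed.

End Decomposition.

Theorem mainTheorem5 (n : nat) (hn : 0 < n) (f : BAN n) (hmon : monotone f) :
  (forall x y : config n,
     transition f x y -> 2 <= #|Dset x y| ->
     ~ (exists w : seq 'I_n,
          [&& cycle_walk f w, x_critical f x w & all (fun v => v \in Dset x y) w]) ->
     async_deriv f x y)
  /\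
  (forall m : nat, 2 <= m ->
     ~ (exists (z : config n) (w : seq 'I_n),
          [&& cycle_walk f w, x_critical f z w & cycle_nodes w <= m]) ->
     forall x y : config n, transition f x y -> #|Dset x y| <= m -> async_deriv f x y).
Proof.
split=> [x y xy _ noncrit | m _ no_small_crit x y xy D_le].
  exact: async_deriv_of_noncritical.
apply: async_deriv_of_noncritical hmon _ _ xy _ => -[w /and3P[cyc_w crit_w wD]].
apply: no_small_crit; exists x, w; rewrite cyc_w crit_w /=.
exact: leq_trans (cycle_nodes_le wD) D_le.
Qed.
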